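(* Let $\hat R=\begin{pmatrix}1&0&0&1\\0&1&-1&0\\0&1&1&0\\-1&0&0&1\end{pmatrix}$, $P_{(+)}=\tfrac12\big(I+i(\hat R-I)\big)$, let $a$ be a complex-valued function on a multiplicatively closed set $G\subseteq\mathbb C\setminus\{0\}$, and set $\hat R(x)=I+a(x)P_{(+)}$. Then for all $x,y\in G$, $$\hat R_{(12)}(x)\hat R_{(23)}(xy)\hat R_{(12)}(y)-\hat R_{(23)}(y)\hat R_{(12)}(xy)\hat R_{(23)}(x)=\Big(a(x)+a(y)+a(x)a(y)-a(xy)\big(1-\tfrac12a(x)a(y)\big)\Big)\big(P_{(+)12}-P_{(+)23}\big).$$ Hence $\hat R(x)$ satisfies the parametrised Yang–Baxter equation $\hat R_{(12)}(x)\hat R_{(23)}(xy)\hat R_{(12)}(y)=\hat R_{(23)}(y)\hat R_{(12)}(xy)\hat R_{(23)}(x)$ for all $x,y\in G$ if and only if $a(xy)\big(1-\tfrac12a(x)a(y)\big)=a(x)+a(y)+a(x)a(y)$ for all $x,y\in G$.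
   Context: $I$ is the identity matrix. For a $4\times4$ matrix $A$ acting on $\mathbb C^2\otimes\mathbb C^2$ (basis ordered $e_1\otimes e_1,e_1\otimes e_2,e_2\otimes e_1,e_2\otimes e_2$), $A_{(12)}=A_{12}=A\otimes I_2$ and $A_{(23)}=A_{23}=I_2\otimes A$ acting on $(\mathbb C^2)^{\otimes 3}$. *)

From HB Require Import structures.
From mathcomp Require Import all_boot all_order all_algebra.
From mathcomp Require Import complex mxtens.
From mathcomp Require Import reals.
Set Implicit Arguments. Unset Strict Implicit. Unset Printing Implicit Defensive.
Import Order.TTheory GRing.Theory Num.Theory.
Local Open Scope ring_scope.
Local Open Scope complex_scope.

Section Defs.
Variable R : realType.
Local Notation C := R[i].

(* the constant matrix \hat R, basis e1e1, e1e2, e2e1, e2e2 *)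
Definition Rhat : 'M[C]_4 :=
  \matrix_(i < 4, j < 4)
    nth 0 (nth [::] [:: [:: 1; 0; 0; 1];
                        [:: 0; 1; -1; 0];
                        [:: 0; 1; 1; 0];
                        [:: -1; 0; 0; 1]] i) j.

Definition Pplus : 'M[C]_4 := 2^-1 *: (1%:M + 'i *: (Rhat - 1%:M)).

Definition Rhat_x (a : C -> C) (x : C) : 'M[C]_4 := 1%:M + a x *: Pplus.

Definition op12 (A : 'M[C]_4) : 'M[C]_8 := tensmx A (1%:M : 'M[C]_2).
Definition op23 (A : 'M[C]_4) : 'M[C]_8 := tensmx (1%:M : 'M[C]_2) A.

Definition mult_closed_nonzero (G : pred C) : Prop :=
  (forall x, x \in G -> x != 0) /\
  (forall x y, x \in G -> y \in G -> x * y \in G).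
End Defs.

(* Rhat - I = sigmax (x) i sigmay =: N squares to -I, and its two copies
   N12 = N (x) I and N23 = I (x) N satisfy N12 N23 N12 = N23 and
   N23 N12 N23 = N12.  Hence u = i N12 and v = i N23 are involutions with
   u v u = -v and v u v = -u, so P(+)12 = (1 + u)/2 and P(+)23 = (1 + v)/2
   are idempotents e, f with e f e - f e f = (e - f)/2.  For any such pair,
   (1 + a e)(1 + c f)(1 + b e) - (1 + b f)(1 + c e)(1 + a f) collapses to
   (a + b + ab - c (1 - ab/2)) (e - f), and e - f <> 0. *)

From HB Require Import structures.
From mathcomp Require Import all_boot all_order all_algebra.
From mathcomp Require Import complex mxtens.
From mathcomp Require Import reals.
From mathcomp Require Import ring.
Import Order.TTheory GRing.Theory Num.Theory.
Local Open Scope ring_scope.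
Local Open Scope complex_scope.
Set Implicit Arguments.
Unset Strict Implicit.
Unset Printing Implicit Defensive.

Section TensorProduct.
Variable R : comPzRingType.

Lemma tensmxA m1 n1 m2 n2 m3 n3
    (A : 'M[R]_(m1, n1)) (B : 'M[R]_(m2, n2)) (C : 'M[R]_(m3, n3)) :
  A *t (B *t C) = castmx (esym (mulnA _ _ _), esym (mulnA _ _ _)) (A *t B *t C).
Proof.
apply/matrixP => i j; rewrite castmxE !mxE mulrA.
congr (A _ _ * B _ _ * C _ _); apply: val_inj;
  [case: i | case: j | case: i | case: j | case: i | case: j] => k _ /=.
1,2: by rewrite mulnC divnMA.
1,2: by rewrite modn_divl.
all: by rewrite modn_dvdm ?dvdn_mull.
Qed.

Lemma tensmx1 m n : (1%:M : 'M[R]_m) *t (1%:M : 'M[R]_n) = 1%:M.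
Proof.
apply/matrixP => i j.
case: (mxtens_indexP i) => i1 i2; case: (mxtens_indexP j) => j1 j2.
rewrite tensmxE !mxE (can_eq (@mxtens_indexK _ _)) xpair_eqE.
by case: (i1 == j1); case: (i2 == j2); rewrite ?mulr1 ?mulr0.
Qed.

Lemma tensmxDl m n p q (A1 A2 : 'M[R]_(m, n)) (B : 'M[R]_(p, q)) :
  (A1 + A2) *t B = A1 *t B + A2 *t B.
Proof. by apply/matrixP => i j; rewrite !mxE mulrDl. Qed.

Lemma tensmxDr m n p q (A : 'M[R]_(m, n)) (B1 B2 : 'M[R]_(p, q)) :
  A *t (B1 + B2) = A *t B1 + A *t B2.
Proof. by apply/matrixP => i j; rewrite !mxE mulrDr. Qed.

Lemma tensmxZl m n p q k (A : 'M[R]_(m, n)) (B : 'M[R]_(p, q)) :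
  (k *: A) *t B = k *: (A *t B).
Proof. by apply/matrixP => i j; rewrite !mxE mulrA. Qed.

Lemma tensmxZr m n p q k (A : 'M[R]_(m, n)) (B : 'M[R]_(p, q)) :
  A *t (k *: B) = k *: (A *t B).
Proof. by apply/matrixP => i j; rewrite !mxE mulrCA. Qed.
End TensorProduct.

Section Baxterization.
Variables (K : comPzRingType) (V : algType K).

Lemma idempotent_mul_affine (g : V) x y : g * g = g ->
  (1 + x *: g) * (1 + y *: g) = 1 + (x + y + x * y) *: g.
Proof.
move=> gg; rewrite mulrDl mul1r mulrDr mulr1 -scalerAl -scalerAr scalerA gg.
by rewrite addrA !scalerDl -!addrA [y *: g + _]addrCA.
Qed.

Lemma sandwich_affine (g h : V) x y :
  (1 + x *: g) * h * (1 + y *: g)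
  = h + (x *: (g * h) + y *: (h * g)) + (x * y) *: (g * h * g).
Proof.
rewrite mulrDl mul1r mulrDr mulr1 -scalerAr mulrDl -!scalerAl scalerDr scalerA.
by rewrite [y * x]mulrC !addrA.
Qed.

Variables (e f : V) (k : K).
Hypotheses (ee : e * e = e) (ff : f * f = f)
  (braid : e * f * e - f * e * f = k *: (e - f)).

Lemma baxterized_yang_baxter_defect a b c :
  (1 + a *: e) * (1 + c *: f) * (1 + b *: e)
  - (1 + b *: f) * (1 + c *: e) * (1 + a *: f)
  = (a + b + a * b - c * (1 - k * a * b)) *: (e - f).
Proof.
(* The cross terms x (e f) + y (f e) of the middle factor agree on both sides. *)
have split_middle (g h : V) (x y : K) : (1 + x *: g) * (1 + c *: h) * (1 + y *: g)
    = (1 + x *: g) * (1 + y *: g) + c *: ((1 + x *: g) * h * (1 + y *: g)).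
  by rewrite [_ * (1 + c *: h)]mulrDr mulr1 -scalerAr mulrDl -scalerAl.
rewrite !split_middle !idempotent_mul_affine // !sandwich_affine.
rewrite [b + a]addrC [b * a]mulrC [b *: _ + _]addrC.
rewrite opprD addrACA [- (1 + _)]opprD [1 + _ + _]addrACA subrr add0r -!scalerBr.
rewrite [- (e + _ + _)]opprD [f + _ + _ + _]addrACA [- (e + _)]opprD [f + _ + _]addrACA subrr addr0.
rewrite -scalerBr braid scalerA -[f - e]opprB -[- (e - f)]scaleN1r -scalerDl scalerA -scalerDl.
by congr (_ *: _); ring.
Qed.
End Baxterization.

Section InvolutionProjector.
Variables (K : fieldType) (V : algType K).
Hypothesis two_neq0 : (2 : K) != 0.

Definition involution_projector (u : V) : V := 2^-1 *: (1 + u).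
Local Notation p := involution_projector.

Lemma involution_sqr_affine (u : V) : u * u = 1 -> (1 + u) * (1 + u) = 2 *: (1 + u).
Proof.
by move=> uu; rewrite mulrDr mulr1 mulrDl mul1r uu [u + 1]addrC scaler_nat mulr2n.
Qed.

Lemma involution_mul_affine (u v : V) : u * u = 1 -> u * v * u = - v ->
  (1 + u) * (1 + v) * (1 + u) = 2 *: (1 + u) + (u * v + v * u).
Proof.
move=> uu uvu; rewrite [_ * (1 + v)]mulrDr mulr1 mulrDl !mulrDr !mulr1 !mulrDl !mul1r uu uvu.
congr (_ + _); first by rewrite [u + 1]addrC scaler_nat mulr2n.
by rewrite -addrA addrCA [v + _]addrC subrK.
Qed.

Lemma involution_projector_idem (u : V) : u * u = 1 -> p u * p u = p u.
Proof.
move=> uu; rewrite /p -scalerAl -scalerAr involution_sqr_affine // !scalerA.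
by rewrite -mulrA mulVf ?mulr1.
Qed.

Lemma involution_projector_braid (u v : V) :
  u * u = 1 -> v * v = 1 -> u * v * u = - v -> v * u * v = - u ->
  p u * p v * p u - p v * p u * p v = 2^-1 *: (p u - p v).
Proof.
move=> uu vv uvu vuv; rewrite /p -!scalerAl -!scalerAr -!scalerAl !scalerA.
rewrite !involution_mul_affine // [v * u + _]addrC -scalerBr opprD addrACA subrr addr0.
by rewrite -!scalerBr !scalerA divfK.
Qed.

Lemma involution_projector_subr_neq0 (u v : V) :
  u * u = 1 -> u * v * u = - v -> p u - p v != 0.
Proof.
move=> uu uvu; rewrite /p -scalerBr scaler_eq0 invr_eq0 (negbTE two_neq0) /=.
rewrite opprD addrACA subrr add0r subr_eq0; apply/eqP => uv.
move: uvu; rewrite -uv uu mul1r => /eqP; rewrite -subr_eq0 opprK -mulr2n.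
rewrite -scaler_nat scaler_eq0 (negbTE two_neq0) /= => /eqP u0.
by move: uu; rewrite u0 mulr0 => /eqP; rewrite eq_sym oner_eq0.
Qed.
End InvolutionProjector.

Section ScaledSquareRoot.
Variables (K : comPzRingType) (V : algType K) (j : K).
Hypothesis j_sqr : j * j = -1.

Lemma scale_sqrtN1_sqr (n : V) : n * n = -1 -> (j *: n) * (j *: n) = 1.
Proof. by move=> nn; rewrite -scalerAl -scalerAr scalerA j_sqr nn scaleN1r opprK. Qed.

Lemma scale_sqrtN1_braid (n m : V) :
  n * m * n = m -> (j *: n) * (j *: m) * (j *: n) = - (j *: m).
Proof.
move=> nmn; rewrite -!scalerAl -!scalerAr -scalerAl !scalerA nmn j_sqr.
by rewrite mulN1r scaleNr.
Qed.
End ScaledSquareRoot.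

Section Pauli.
Variable R : comPzRingType.

Definition sigmax : 'M[R]_2 :=
  \matrix_(i < 2, j < 2) nth 0 (nth [::] [:: [:: 0; 1]; [:: 1; 0]] i) j.
(* i sigma_y, which has real entries. *)
Definition isigmay : 'M[R]_2 :=
  \matrix_(i < 2, j < 2) nth 0 (nth [::] [:: [:: 0; 1]; [:: -1; 0]] i) j.

Ltac mx2_compute := apply/matrixP => - [[|[|//]] ?] [[|[|//]] ?];
  rewrite !mxE !big_ord_recr big_ord0 /= ?mxE ?big_ord_recr ?big_ord0 /= ?mxE /=; ring.

Lemma sigmax_sqr : sigmax *m sigmax = 1%:M. Proof. mx2_compute. Qed.
Lemma isigmay_sqr : isigmay *m isigmay = - 1%:M. Proof. mx2_compute. Qed.
Lemma isigmay_sigmax_isigmay : isigmay *m sigmax *m isigmay = sigmax.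
Proof. mx2_compute. Qed.
Lemma sigmax_isigmay_sigmax : sigmax *m isigmay *m sigmax = - isigmay.
Proof. mx2_compute. Qed.

Local Notation N := (sigmax *t isigmay).

Lemma sigma_tens_sqr : N *m N = - 1%:M.
Proof.
by rewrite tensmx_mul sigmax_sqr isigmay_sqr -scaleN1r tensmxZr tensmx1 scaleN1r.
Qed.

Local Notation I2 := (1%:M : 'M[R]_2).

Lemma sigma_tens12E : N *t I2 = sigmax *t (isigmay *t I2) :> 'M[R]_8.
Proof. by rewrite tensmxA castmx_id. Qed.

Local Notation N12 := (sigmax *t (isigmay *t I2)).
Local Notation N23 := (I2 *t N).

Lemma sigma_tens_braid12 : N12 *m N23 *m N12 = N23.
Proof.
by rewrite !tensmx_mul !mulmx1 !mul1mx sigmax_sqr isigmay_sigmax_isigmay.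
Qed.

Lemma sigma_tens_braid23 : N23 *m N12 *m N23 = N12.
Proof.
rewrite !tensmx_mul !mulmx1 !mul1mx sigmax_isigmay_sigmax isigmay_sqr.
by rewrite -!scaleN1r !tensmxZl !tensmxZr scalerA mulN1r opprK scale1r.
Qed.
End Pauli.

Section RhatYangBaxter.
Variable R : realType.
Local Notation C := R[i].
Local Notation N := (sigmax C *t isigmay C).

Lemma Rhat_subr1 : Rhat R - 1%:M = N :> 'M_(2 * 2).
Proof.
apply/matrixP => i j.
case: (mxtens_indexP i) => i1 i2; case: (mxtens_indexP j) => j1 j2.
rewrite tensmxE !mxE.
by case: i1 => [[|[|//]] ?]; case: i2 => [[|[|//]] ?];
   case: j1 => [[|[|//]] ?]; case: j2 => [[|[|//]] ?]; rewrite /=; ring.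
Qed.

Lemma op12D (A B : 'M[C]_4) : op12 (A + B) = op12 A + op12 B.
Proof. by rewrite /op12 tensmxDl. Qed.
Lemma op23D (A B : 'M[C]_4) : op23 (A + B) = op23 A + op23 B.
Proof. by rewrite /op23 tensmxDr. Qed.
Lemma op12Z k (A : 'M[C]_4) : op12 (k *: A) = k *: op12 A.
Proof. by rewrite /op12 tensmxZl. Qed.
Lemma op23Z k (A : 'M[C]_4) : op23 (k *: A) = k *: op23 A.
Proof. by rewrite /op23 tensmxZr. Qed.
Lemma op12_1 : op12 (1%:M : 'M[C]_4) = 1%:M. Proof. by rewrite /op12 tensmx1. Qed.
Lemma op23_1 : op23 (1%:M : 'M[C]_4) = 1%:M. Proof. by rewrite /op23 tensmx1. Qed.
Lemma op12M (A B : 'M[C]_4) : op12 A *m op12 B = op12 (A *m B).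
Proof.
rewrite /op12 -[in RHS](mulmx1 (1%:M : 'M[C]_2)).
exact (tensmx_mul A (1%:M : 'M[C]_2) B 1%:M).
Qed.
Lemma op23M (A B : 'M[C]_4) : op23 A *m op23 B = op23 (A *m B).
Proof.
rewrite /op23 -[in RHS](mulmx1 (1%:M : 'M[C]_2)).
exact (tensmx_mul (1%:M : 'M[C]_2) A 1%:M B).
Qed.

Let i_sqr : 'i * 'i = -1 :> C.
Proof. by rewrite -expr2 sqr_i. Qed.

Let two_neq0 : (2 : C) != 0.
Proof. by rewrite pnatr_eq0. Qed.

Local Notation u12 := ('i *: op12 N).
Local Notation u23 := ('i *: op23 N).

Lemma u12_sqr : u12 * u12 = 1 :> 'M[C]_8.
Proof.
apply: (scale_sqrtN1_sqr i_sqr).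
by rewrite -mulmxE op12M sigma_tens_sqr -scaleN1r op12Z op12_1 scaleN1r.
Qed.

Lemma u23_sqr : u23 * u23 = 1 :> 'M[C]_8.
Proof.
apply: (scale_sqrtN1_sqr i_sqr).
by rewrite -mulmxE op23M sigma_tens_sqr -scaleN1r op23Z op23_1 scaleN1r.
Qed.

Lemma u12_braid : u12 * u23 * u12 = - u23 :> 'M[C]_8.
Proof.
apply: (scale_sqrtN1_braid i_sqr).
rewrite -!mulmxE /op12 sigma_tens12E; exact (sigma_tens_braid12 C).
Qed.

Lemma u23_braid : u23 * u12 * u23 = - u12 :> 'M[C]_8.
Proof.
apply: (scale_sqrtN1_braid i_sqr).
rewrite -!mulmxE /op12 sigma_tens12E; exact (sigma_tens_braid23 C).
Qed.

Lemma op12_Pplus : op12 (Pplus R) = involution_projector u12.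
Proof. by rewrite /Pplus Rhat_subr1 op12Z op12D op12Z op12_1. Qed.

Lemma op23_Pplus : op23 (Pplus R) = involution_projector u23.
Proof. by rewrite /Pplus Rhat_subr1 op23Z op23D op23Z op23_1. Qed.

Lemma op12_Rhat_x a z : op12 (Rhat_x a z) = 1 + a z *: involution_projector u12.
Proof. by rewrite /Rhat_x op12D op12Z op12_1 op12_Pplus. Qed.

Lemma op23_Rhat_x a z : op23 (Rhat_x a z) = 1 + a z *: involution_projector u23.
Proof. by rewrite /Rhat_x op23D op23Z op23_1 op23_Pplus. Qed.

Lemma Rhat_x_yang_baxter_defect (a : C -> C) x y :
  op12 (Rhat_x a x) *m op23 (Rhat_x a (x * y)) *m op12 (Rhat_x a y)
  - op23 (Rhat_x a y) *m op12 (Rhat_x a (x * y)) *m op23 (Rhat_x a x)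
  = (a x + a y + a x * a y - a (x * y) * (1 - 2^-1 * a x * a y))
      *: (op12 (Pplus R) - op23 (Pplus R)).
Proof.
rewrite !op12_Rhat_x !op23_Rhat_x op12_Pplus op23_Pplus.
apply: baxterized_yang_baxter_defect.
- exact (involution_projector_idem two_neq0 u12_sqr).
- exact (involution_projector_idem two_neq0 u23_sqr).
- exact (involution_projector_braid two_neq0 u12_sqr u23_sqr u12_braid u23_braid).
Qed.

Lemma Pplus12_subr_Pplus23_neq0 : op12 (Pplus R) - op23 (Pplus R) != 0.
Proof.
rewrite op12_Pplus op23_Pplus.
exact (involution_projector_subr_neq0 two_neq0 u12_sqr u12_braid).
Qed.
End RhatYangBaxter.

Theorem mainTheorem4 (R : realType) (G : pred R[i]) (a : R[i] -> R[i]) :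
  mult_closed_nonzero G ->
  (forall x y, x \in G -> y \in G ->
     op12 (Rhat_x a x) *m op23 (Rhat_x a (x * y)) *m op12 (Rhat_x a y)
     - op23 (Rhat_x a y) *m op12 (Rhat_x a (x * y)) *m op23 (Rhat_x a x)
     = (a x + a y + a x * a y - a (x * y) * (1 - 2^-1 * a x * a y))
         *: (op12 (Pplus R) - op23 (Pplus R)))
  /\
  ((forall x y, x \in G -> y \in G ->
     op12 (Rhat_x a x) *m op23 (Rhat_x a (x * y)) *m op12 (Rhat_x a y)
     = op23 (Rhat_x a y) *m op12 (Rhat_x a (x * y)) *m op23 (Rhat_x a x))
   <->
   (forall x y, x \in G -> y \in G ->
     a (x * y) * (1 - 2^-1 * a x * a y) = a x + a y + a x * a y)).
Proof.
move=> _; split=> [x y _ _ | ]; first exact: Rhat_x_yang_baxter_defect.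
split=> ybe x y Gx Gy.
  move: (Rhat_x_yang_baxter_defect a x y); rewrite ybe // subrr => /esym/eqP.
  by rewrite scaler_eq0 (negbTE (Pplus12_subr_Pplus23_neq0 R)) orbF subr_eq0 => /eqP ->.
by apply/eqP; rewrite -subr_eq0 Rhat_x_yang_baxter_defect ybe // subrr scale0r.
Qed.
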